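(* Let $f$ be a $k$-ary constraint. For any $1\le d\le\deg(f)$ there exists a $d$-ary constraint $g$ expressible by $f$ with constants such that its characteristic polynomial $P_g$ has degree exactly $d$, i.e., its coefficient at the monomial $x_1x_2\cdots x_d$ is non-zero.
   Context: A $k$-ary constraint is $f\colon\{0,1\}^k\to\{0,1\}$. Its characteristic polynomial $P_f$ is the unique multilinear polynomial over $\mathbb{R}$ in $k$ variables with $P_f(x)=f(x)$ for all $x\in\{0,1\}^k$; $\deg(f)=\deg(P_f)$. A $d$-ary constraint $g$ is expressible by $f$ with constants if $g(x_1,\dots,x_d)=f(\xi_1,\dots,\xi_k)$ identically, where each $\xi_j$ is either a variable $x_i$ for some $i\in[d]$ or one of the constants $0,1$. *)

From mathcomp Require Import all_boot all_order all_algebra.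
From mathcomp Require Import mpoly.
Set Implicit Arguments. Unset Strict Implicit. Unset Printing Implicit Defensive.
Import GRing.Theory.
Local Open Scope ring_scope.

Definition constraint (k : nat) := {ffun 'I_k -> bool} -> bool.

(* A polynomial over R = rat (a subfield of R; the interpolating multilinear
   polynomial has rational coefficients) is multilinear if every monomial
   in its support has all exponents <= 1. *)
Definition multilinear (k : nat) (p : {mpoly rat[k]}) : Prop :=
  forall m, m \in msupp p -> forall i : 'I_k, (m i <= 1)%N.

Definition is_char_poly (k : nat) (f : constraint k) (p : {mpoly rat[k]}) : Prop :=
  multilinear p /\
  forall x : {ffun 'I_k -> bool}, p.@[fun i => ((x i : nat)%:R : rat)] = ((f x : nat)%:R : rat).

(* deg f = total degree of P_f; msize p = deg p + 1 (and 0 for p = 0). *)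
Definition deg_poly (k : nat) (p : {mpoly rat[k]}) : nat := (msize p).-1.

Definition subst_input (d k : nat) (xi : 'I_k -> 'I_d + bool)
  (x : {ffun 'I_d -> bool}) : {ffun 'I_k -> bool} :=
  [ffun j => match xi j with inl i => x i | inr b => b end].

Definition expressible (d k : nat) (g : constraint d) (f : constraint k) : Prop :=
  exists xi : 'I_k -> 'I_d + bool, forall x, g x = f (subst_input xi x).

Definition full_monomial (d : nat) : 'X_{1..d} := [multinom (1%N) | i < d].

From mathcomp Require Import all_boot all_order all_algebra.
From mathcomp Require Import mpoly zify.

(* The coefficient of x_U in P_f is the Mobius transform
   sum_(V \subset U) (-1)^(|U| - |V|) f(1_V) of the values of f on the cube.
   Take a monomial of P_f of degree at least d, with support S, and split
   S = A + W with |A| = d.  The coefficient at S is a signed sum, over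
   C \subset W, of the Mobius coefficients at A of f with the variables of C
   set to 1 and the rest of W set to 0; one of them is nonzero.  Substituting
   these constants, 1 on C and 0 outside A and C, gives a d-ary g whose
   top coefficient is that nonzero number. *)
Set Implicit Arguments. Unset Strict Implicit. Unset Printing Implicit Defensive.
Import GRing.Theory.
Local Open Scope ring_scope.

Section Mobius.
Variables (T : finType) (R : pzRingType).
Implicit Types (A B C S U V X : {set T}) (h : {set T} -> R).

Lemma sum_sign_interval A B : A \subset B ->
  \sum_(V : {set T} | (A \subset V) && (V \subset B)) (-1) ^+ #|V|
  = (A == B)%:R * (-1) ^+ #|B| :> R.
Proof.
move=> AB; have [<-|neAB] := eqVneq A B.
  by rewrite (big_pred1 A) ?mul1r // => V; rewrite andbC -eqEsubset.
have [j jB jA] : exists2 j, j \in B & j \notin A.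
  by apply/subsetPn; apply: contra neAB => BA; rewrite eqEsubset AB.
(* pair each V without j with j |: V: their signs cancel *)
rewrite mul0r (bigID (fun V => j \in V)) /=.
rewrite (reindex_onto (fun V => j |: V) (fun V => V :\ j)) /=; last first.
  by move=> V /andP[_ jV]; rewrite setD1K.
rewrite [X in X + _](eq_bigl (fun V => (A \subset V) && (V \subset B) && (j \notin V)))
  => [|V]; last first.
  rewrite setU11 andbT; have [jV|jV] := boolP (j \in V); last first.
    rewrite setU1K // eqxx !andbT subUset sub1set jB /=.
    by rewrite -[in X in _ = X && _](setU1K jV) subsetD1 jA andbT.
  suff -> : ((j |: V) :\ j == V) = false by rewrite !andbF.
  by apply/negbTE/eqP => /setP/(_ j); rewrite setD11 jV.
rewrite -big_split /= big1 // => V /andP[_ jV].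
by rewrite cardsU1 jV exprS mulN1r addNr.
Qed.

(* The sign (-1) ^+ (#|U| + #|V|) is (-1) ^+ (#|U| - #|V|) for V \subset U. *)
Definition mobius h U : R :=
  \sum_(V : {set T} | V \subset U) (-1) ^+ (#|U| + #|V|) * h V.

Lemma eq_mobius h1 h2 U : h1 =1 h2 -> mobius h1 U = mobius h2 U.
Proof. by move=> eq_h; apply: eq_bigr => V _; rewrite eq_h. Qed.

Lemma mobius_sum (I : Type) (r : seq I) (c : I -> R) (g : I -> {set T} -> R) U :
  mobius (fun V => \sum_(i <- r) c i * g i V) U = \sum_(i <- r) c i * mobius (g i) U.
Proof.
rewrite /mobius; under eq_bigr => V _ do rewrite big_distrr.
rewrite exchange_big; apply: eq_bigr => i _; rewrite big_distrr /=.
by apply: eq_bigr => V _ /=; rewrite mulrA -(commr_sign (c i)) -mulrA.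
Qed.

Lemma mobius_indicator A U :
  mobius (fun V => (A \subset V)%:R) U = (A == U)%:R.
Proof.
rewrite /mobius; under eq_bigr => V _ do rewrite exprD -mulrA.
rewrite -big_distrr /=.
under eq_bigr => V _ do rewrite mulr_natr mulrb.
rewrite -big_mkcondr (eq_bigl _ _ (fun V => andbC _ _)) /=.
have [AU|nAU] := boolP (A \subset U).
  by rewrite sum_sign_interval // mulrA commr_nat -mulrA -expr2 sqrr_sign mulr1.
rewrite big1 ?mulr0 => [|V /andP[AV VU]]; last by rewrite (subset_trans AV VU) in nAU.
by case: eqP nAU => // ->; rewrite subxx.
Qed.

Lemma mobius_inversion h X :
  \sum_(U : {set T} | U \subset X) mobius h U = h X.
Proof.
rewrite (exchange_big_dep (fun V => V \subset X)) /=; last first.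
  by move=> U V UX VU; apply: subset_trans VU UX.
transitivity (\sum_(V : {set T} | V \subset X) (V == X)%:R * h V).
  apply: eq_bigr => V VX; under eq_bigr => U _ do rewrite exprD -mulrA.
  rewrite -big_distrl (eq_bigl _ _ (fun U => andbC _ _)) sum_sign_interval //=.
  by case: eqP => [->|_]; rewrite ?mul0r // mul1r mulrA -expr2 sqrr_sign mul1r.
rewrite (bigD1 X) //= eqxx mul1r big1 ?addr0 // => V /andP[_ /negbTE->].
by rewrite mul0r.
Qed.

Lemma mobius_setU h A B : [disjoint A & B] ->
  mobius h (A :|: B) = \sum_(C : {set T} | C \subset B)
    (-1) ^+ (#|B| + #|C|) * mobius (fun V => h (V :|: C)) A.
Proof.
move=> dAB; have dBA : [disjoint B & A] by rewrite disjoint_sym.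
rewrite /mobius; under [RHS]eq_bigr => C _ do rewrite big_distrr /=.
rewrite pair_big_dep /= (reindex_onto (fun p : {set T} * {set T} => p.2 :|: p.1)
  (fun V => (V :&: B, V :&: A))) /=; last first.
  by move=> V VAB; rewrite -setIUr (setIidPl VAB).
rewrite (eq_bigl (fun p : {set T} * {set T} => (p.1 \subset B) && (p.2 \subset A)))
  => [|[C V] /=].
  apply: eq_bigr => -[C V] /= /andP[CB VA].
  have cardsU_disjoint (X Y : {set T}) :
      [disjoint X & Y] -> #|X :|: Y| = (#|X| + #|Y|)%N.
    by move=> dXY; rewrite cardsU (disjoint_setI0 dXY) cards0 subn0.
  rewrite !cardsU_disjoint //; last exact: disjointW VA CB dAB.
  by rewrite mulrA -exprD addnACA addnC.
apply/andP/andP => [[_ /eqP[<- <-]]|[CB VA]]; first by rewrite !subsetIr.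
split; first exact: setUSS.
rewrite !setIUl (setIidPl CB) (setIidPl VA).
rewrite (disjoint_setI0 (disjointWl VA dAB)) (disjoint_setI0 (disjointWl CB dBA)).
by rewrite set0U setU0.
Qed.

Lemma mobius_shift_neq0 h A S : A \subset S -> mobius h S != 0 ->
  exists2 C : {set T}, [disjoint A & C] & mobius (fun V => h (V :|: C)) A != 0.
Proof.
move=> sAS; have dA : [disjoint A & S :\: A].
  by rewrite -setI_eq0 setDE setICA setICr setI0.
have <- : A :|: (S :\: A) = S.
  by apply/setP => x; rewrite !inE; case: (boolP (x \in A)) => //= /(subsetP sAS).
rewrite mobius_setU //.
have [C /andP[CW nzC] _|none] :=
  pickP (fun C => (C \subset S :\: A) && (mobius (fun V => h (V :|: C)) A != 0)).
  by exists C => //; apply: disjointWr CW dA.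
rewrite big1 ?eqxx // => C CW.
by move: (none C) => /= /negbT; rewrite CW negbK => /eqP ->; rewrite mulr0.
Qed.

End Mobius.

Lemma mobius_imset (aT rT : finType) (R : pzRingType) (e : aT -> rT)
    (F : {set rT} -> R) (U : {set aT}) : injective e ->
  mobius (fun V => F (e @: V)) U = mobius F (e @: U).
Proof.
move=> inj_e; have imsetK (W : {set aT}) : e @^-1: (e @: W) = W.
  by apply/setP => x; rewrite inE mem_imset.
rewrite /mobius [RHS](reindex_onto (fun W : {set aT} => e @: W)
  (fun V => e @^-1: V)) /=.
  apply: eq_big => [W|W _]; last by rewrite !card_imset.
  rewrite imsetK eqxx andbT; apply/idP/idP => [|sWU]; first exact: imsetS.
  by apply/subsetP => x xW; rewrite -(mem_imset _ _ inj_e) (subsetP sWU) ?imset_f.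
move=> V sVU; apply/setP => y; apply/imsetP/idP => [[x]|yV].
  by rewrite inE => xV ->.
have /imsetP[x _ yx] := subsetP sVU y yV.
by exists x; rewrite // inE -yx.
Qed.

Section Cube.
Variable n : nat.
Implicit Types (U V X : {set 'I_n}) (m : 'X_{1..n}) (p : {mpoly rat[n]}).

Definition ffun_of_set V : {ffun 'I_n -> bool} := [ffun i => i \in V].

Definition cube_point V : 'I_n -> rat := fun i => (ffun_of_set V i)%:R.

Definition cube_values (f : constraint n) V : rat := (f (ffun_of_set V))%:R.

Definition mnm_of_set U : 'X_{1..n} := [multinom (i \in U : nat) | i < n].

Definition mnm_supp m : {set 'I_n} := [set i | 0 < m i]%N.

Lemma mnm_of_setK : cancel mnm_of_set mnm_supp.
Proof. by move=> U; apply/setP => i; rewrite inE mnmE; case: (i \in U). Qed.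

Lemma mnm_of_set_inj : injective mnm_of_set.
Proof. exact: can_inj mnm_of_setK. Qed.

Lemma mdeg_mnm_of_set U : mdeg (mnm_of_set U) = #|U|.
Proof.
rewrite mdegE -sum1_card [RHS]big_mkcond /=; apply: eq_bigr => i _.
by rewrite mnmE; case: (i \in U).
Qed.

Lemma full_monomialE : full_monomial n = mnm_of_set setT.
Proof. by apply/mnmP => i; rewrite !mnmE inE. Qed.

Lemma multilinear_mnm p m : multilinear p -> m \in msupp p ->
  mnm_of_set (mnm_supp m) = m.
Proof.
move=> ml_p mp; apply/mnmP => i; rewrite mnmE inE.
by move: (ml_p m mp i); case: (m i) => [|[|]].
Qed.

Lemma mevalX_cube_point m V : 'X_[m].@[cube_point V] = (mnm_supp m \subset V)%:R.
Proof.
rewrite mevalX; have [sub_mV|] := boolP (mnm_supp m \subset V).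
  apply: big1 => i _; rewrite /cube_point ffunE; have [|iV] := boolP (i \in V).
    by rewrite expr1n.
  have : i \notin mnm_supp m by apply: contra iV; apply: (subsetP sub_mV).
  by rewrite inE -eqn0Ngt => /eqP ->.
case/subsetPn => i; rewrite inE => mi iV.
by rewrite (bigD1 i) //= /cube_point ffunE (negbTE iV) expr0n eqn0Ngt mi mul0r.
Qed.

Lemma mcoeff_multilinear p U : multilinear p ->
  p@_(mnm_of_set U) = mobius (fun V => p.@[cube_point V]) U.
Proof.
move=> ml_p; have meval_cube V :
    p.@[cube_point V] = \sum_(m <- msupp p) p@_m * (mnm_supp m \subset V)%:R.
  by rewrite mevalE; apply: eq_bigr => m _; rewrite -mevalX mevalX_cube_point.
rewrite (eq_mobius _ meval_cube) mobius_sum {1}(mpolyE p) raddf_sum /=.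
apply: eq_big_seq => m mp; rewrite mcoeffZ mcoeffX mobius_indicator.
by rewrite -[m in m == _](multilinear_mnm ml_p mp) (inj_eq mnm_of_set_inj).
Qed.

Definition mpoly_interp (G : {set 'I_n} -> rat) : {mpoly rat[n]} :=
  \sum_U mobius G U *: 'X_[mnm_of_set U].

Lemma mcoeff_interp G U : (mpoly_interp G)@_(mnm_of_set U) = mobius G U.
Proof.
rewrite raddf_sum (bigD1 U) //= big1 ?addr0 => [|V neVU].
  by rewrite mcoeffZ mcoeffX eqxx mulr1.
by rewrite mcoeffZ mcoeffX (inj_eq mnm_of_set_inj) (negbTE neVU) mulr0.
Qed.

Lemma interp_multilinear G : multilinear (mpoly_interp G).
Proof.
move=> m /msupp_sum_le/flatten_mapP[U _ /msuppZ_le].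
by rewrite msuppX inE => /eqP -> i; rewrite mnmE; case: (i \in U).
Qed.

Lemma meval_interp G X : (mpoly_interp G).@[cube_point X] = G X.
Proof.
rewrite raddf_sum -mobius_inversion [RHS]big_mkcond /=; apply: eq_bigr => U _.
by rewrite mevalZ mevalX_cube_point mnm_of_setK mulr_natr mulrb.
Qed.

Lemma interp_char_poly (f : constraint n) :
  is_char_poly f (mpoly_interp (cube_values f)).
Proof.
split=> [|x]; first exact: interp_multilinear.
have -> : x = ffun_of_set [set i | x i] by apply/ffunP => i; rewrite !ffunE inE.
exact: meval_interp.
Qed.

Lemma mcoeff_char_poly (f : constraint n) p U : is_char_poly f p ->
  p@_(mnm_of_set U) = mobius (cube_values f) U.
Proof.
move=> [ml_p eval_p]; rewrite mcoeff_multilinear //; apply: eq_mobius => V.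
exact: eval_p.
Qed.

Lemma msize_multilinear p : multilinear p -> (msize p <= n.+1)%N.
Proof.
move=> ml_p; rewrite msizeE; apply/bigmax_leqP_seq => m mp _.
rewrite ltnS -(multilinear_mnm ml_p mp) mdeg_mnm_of_set.
by rewrite -[X in (_ <= X)%N]card_ord max_card.
Qed.

Lemma deg_poly_full p : multilinear p -> p@_(full_monomial n) != 0 ->
  deg_poly p = n.
Proof.
move=> ml_p; rewrite -mcoeff_msupp full_monomialE => /msize_mdeg_lt.
rewrite mdeg_mnm_of_set cardsT card_ord /deg_poly => lt_n_size.
by have := msize_multilinear ml_p; lia.
Qed.

Lemma char_poly_mobius_deg (f : constraint n) p : is_char_poly f p -> p != 0 ->
  exists2 S : {set 'I_n}, #|S| = deg_poly p & mobius (cube_values f) S != 0.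
Proof.
move=> char_p nz_p; have [ml_p _] := char_p.
have lead_p := multilinear_mnm ml_p (mlead_supp nz_p).
exists (mnm_supp (mlead p)).
  by rewrite -mdeg_mnm_of_set lead_p /deg_poly -mlead_deg.
by rewrite -(mcoeff_char_poly _ char_p) lead_p -mcoeff_msupp mlead_supp.
Qed.
End Cube.

Section Restriction.
Variables (d k : nat) (e : 'I_d -> 'I_k) (C : {set 'I_k}).
Hypotheses (inj_e : injective e) (dC : [disjoint e @: setT & C]).

Definition restrict_subst (j : 'I_k) : 'I_d + bool :=
  if [pick i | e i == j] is Some i then inl i else inr (j \in C).

Lemma subst_input_restrict V :
  subst_input restrict_subst (ffun_of_set V) = ffun_of_set (e @: V :|: C).
Proof.
apply/ffunP => j; rewrite !ffunE /restrict_subst; case: pickP => [i /eqP <-|none].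
  by rewrite ffunE inE mem_imset // (disjointFr dC) ?orbF // imset_f.
rewrite inE (_ : j \in e @: V = false) //.
by apply/negbTE/imsetP => -[i _ ji]; move: (none i); rewrite ji eqxx.
Qed.

Lemma mobius_restrict (f : constraint k) :
  mobius (cube_values (fun x => f (subst_input restrict_subst x))) setT
  = mobius (fun V => cube_values f (V :|: C)) (e @: setT).
Proof.
rewrite -mobius_imset //; apply: eq_mobius => V.
by rewrite /cube_values subst_input_restrict.
Qed.

End Restriction.

Theorem lemma14 (k : nat) (f : constraint k) (Pf : {mpoly rat[k]}) :
  is_char_poly f Pf ->
  forall d : nat, (1 <= d)%N -> (d <= deg_poly Pf)%N ->
  exists (g : constraint d) (Pg : {mpoly rat[d]}),
    expressible g f /\ is_char_poly g Pg /\
    deg_poly Pg = d /\ Pg@_(full_monomial d) != 0.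
Proof.
move=> char_f d d_gt0 le_d_deg.
have nz_Pf : Pf != 0.
  by apply: contraTneq le_d_deg => ->; rewrite /deg_poly msize0 -ltnNge.
have [S card_S nz_S] := char_poly_mobius_deg char_f nz_Pf.
have le_dS : (d <= #|S|)%N by rewrite card_S.
pose e i : 'I_k := enum_val (widen_ord le_dS i).
have inj_e : injective e.
  by move=> i j /enum_val_inj /(congr1 val) /= eq_ij; apply: val_inj.
have sub_eS : e @: setT \subset S.
  by apply/subsetP => _ /imsetP[i _ ->]; apply: enum_valP.
have [C dC nz_C] := mobius_shift_neq0 sub_eS nz_S.
pose g : constraint d := fun x => f (subst_input (restrict_subst e C) x).
pose Pg := mpoly_interp (cube_values g).
have top_Pg : Pg@_(full_monomial d) != 0.
  by rewrite full_monomialE mcoeff_interp (mobius_restrict inj_e dC).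
exists g, Pg; split; first by exists (restrict_subst e C).
split; first exact: interp_char_poly.
by split=> //; apply: deg_poly_full (@interp_multilinear _ _) top_Pg.
Qed.
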